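(* Let $Z\subseteq\{0,1\}^n$ and $$X=\{(\bm x,\bm z)\in\mathbb R^n\times Z:\ \|\bm x\|_2^2\le 1,\ x_i(1-z_i)=0\ \text{for } i=1,\dots,n\}.$$ Then $$\operatorname{conv}(X)=\bigcap_{\bm\alpha\in\mathbb R^n}P(\bm\alpha).$$
   Context: For $\bm\alpha\in\mathbb R^n$, $P_0(\bm\alpha)=\{(\bm x,\bm z)\in\mathbb R^n\times Z:\ \sum_{i=1}^n|\alpha_ix_i|\le\sqrt{\sum_{i=1}^n\alpha_i^2z_i}\}$ and $P(\bm\alpha)=\operatorname{conv}(P_0(\bm\alpha))$, the convex hull. *)

From HB Require Import structures.
From mathcomp Require Import all_boot all_order all_algebra.
From mathcomp Require Import classical_sets reals.
Set Implicit Arguments. Unset Strict Implicit. Unset Printing Implicit Defensive.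
Import Order.TTheory GRing.Theory Num.Theory.
Local Open Scope ring_scope.
Local Open Scope classical_set_scope.

Definition pt (R : realType) (n : nat) := (('I_n -> R) * ('I_n -> R))%type.

Definition conv (R : realType) (n : nat) (S : set (pt R n)) : set (pt R n) :=
  fun p => exists (m : nat) (l : 'I_m -> R) (q : 'I_m -> pt R n),
    [/\ (forall k, 0 <= l k), \sum_(k < m) l k = 1, (forall k, S (q k)),
        (forall i, p.1 i = \sum_(k < m) l k * (q k).1 i) &
        (forall i, p.2 i = \sum_(k < m) l k * (q k).2 i)].

Definition Xset (R : realType) (n : nat) (Z : set ('I_n -> R)) : set (pt R n) :=
  fun p => [/\ Z p.2, \sum_(i < n) p.1 i ^+ 2 <= 1 &
               forall i, p.1 i * (1 - p.2 i) = 0].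

Definition P0 (R : realType) (n : nat) (Z : set ('I_n -> R)) (alpha : 'I_n -> R)
  : set (pt R n) :=
  fun p => Z p.2 /\
    \sum_(i < n) `|alpha i * p.1 i| <= Num.sqrt (\sum_(i < n) alpha i ^+ 2 * p.2 i).

Definition Pset (R : realType) (n : nat) (Z : set ('I_n -> R)) (alpha : 'I_n -> R)
  : set (pt R n) := conv (P0 Z alpha).

From HB Require Import structures.
From mathcomp Require Import all_boot all_order all_algebra.
From mathcomp Require Import boolp classical_sets functions reals.
From mathcomp Require Import topology normedtype derive matrix_normedtype.
From mathcomp Require Import ring lra.
Import Order.TTheory GRing.Theory Num.Theory.
Import numFieldNormedType.Exports.
Local Open Scope ring_scope.
Local Open Scope classical_set_scope.
Set Implicit Arguments. Unset Strict Implicit. Unset Printing Implicit Defensive.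

(* X lies in every P_0(alpha) by Cauchy-Schwarz, which gives one inclusion.
   Conversely, conv(X) is compact and convex: it is the linear image of the
   compact convex set of "perspective" data (lambda_b, lambda_b x_b), one pair
   per 0/1 pattern b.  Given p in every P(alpha), let q be the point of conv(X)
   nearest to p and d = p - q, so that <d, y> <= <d, q> for all y in X.  For
   alpha = d_x, a linear function with x-part alpha attains its maximum over
   P_0(alpha) on X, hence <d, p> <= <d, q> as p lies in P(alpha); thus
   |d|^2 <= 0 and p = q lies in conv(X). *)

Section SumOfSquares.
Variables (R : realFieldType) (I : finType).

Lemma sum_sqr_le0 (v : I -> R) : \sum_i v i ^+ 2 <= 0 -> forall i, v i = 0.
Proof.
move=> v0 i; apply/eqP; rewrite -sqrf_eq0; apply/eqP.
apply: (@psumr_eq0P _ _ xpredT (fun i => v i ^+ 2)) => // [j _|]; first exact: sqr_ge0.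
by apply/le_anti; rewrite v0 sumr_ge0 // => j _; rewrite sqr_ge0.
Qed.

Lemma sum_mul_le (v w : I -> R) (a b : R) : 0 <= a -> 0 <= b ->
    \sum_i v i ^+ 2 <= a ^+ 2 -> \sum_i w i ^+ 2 <= b ^+ 2 ->
  \sum_i v i * w i <= a * b.
Proof.
move=> a0 b0 va wb.
have [a_eq0|a_neq0] := eqVneq a 0.
  rewrite a_eq0 expr0n in va; rewrite a_eq0 mul0r big1 // => i _.
  by rewrite (sum_sqr_le0 va) mul0r.
have [b_eq0|b_neq0] := eqVneq b 0.
  rewrite b_eq0 expr0n in wb; rewrite b_eq0 mulr0 big1 // => i _.
  by rewrite (sum_sqr_le0 wb) mulr0.
have ab_gt0 : 0 < a * b by rewrite mulr_gt0 // lt_def ?a_neq0 ?b_neq0.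
have amgm : 2 * (a * b) * \sum_i v i * w i <=
    b ^+ 2 * \sum_i v i ^+ 2 + a ^+ 2 * \sum_i w i ^+ 2.
  rewrite !mulr_sumr -big_split /=; apply: ler_sum => i _.
  by have := sqr_ge0 (b * v i - a * w i); nra.
have := ler_wpM2l (sqr_ge0 b) va; have := ler_wpM2l (sqr_ge0 a) wb.
nra.
Qed.

End SumOfSquares.

Section Continuity.
Variables (T : topologicalType) (R : realType).
Implicit Types (f g : T -> R).

Lemma continuous_add f g :
  continuous f -> continuous g -> continuous (fun x => f x + g x).
Proof. by move=> cf cg x; exact: continuousD (cf x) (cg x). Qed.

Lemma continuous_sub f g :
  continuous f -> continuous g -> continuous (fun x => f x - g x).
Proof. by move=> cf cg x; exact: continuousB (cf x) (cg x). Qed.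

Lemma continuous_mul f g :
  continuous f -> continuous g -> continuous (fun x => f x * g x).
Proof. by move=> cf cg x; exact: continuousM (cf x) (cg x). Qed.

Lemma continuous_sum (I : Type) (r : seq I) (P : pred I) (F : I -> T -> R) :
  (forall i, continuous (F i)) -> continuous (fun x => \sum_(i <- r | P i) F i x).
Proof.
move=> cF; rewrite -fct_sumE; apply: (big_ind (fun f : T -> R => continuous f)) => //.
- exact: (@cst_continuous T R 0).
- by move=> f g cf cg x; exact: continuousD (cf x) (cg x).
Qed.

Lemma closed_le_continuous f g :
  continuous f -> continuous g -> closed [set x | f x <= g x].
Proof.
move=> cf cg.
rewrite (_ : [set x | _] = (fun x => g x - f x) @^-1` [set y | 0 <= y]).
  by apply: preimage_closed; [move=> x _; exact: continuous_sub | exact: closed_ge].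
by apply/seteqP; split => x /=; rewrite subr_ge0.
Qed.

Lemma closed_eq_continuous f c : continuous f -> closed [set x | f x = c].
Proof.
move=> cf; apply: (@preimage_closed _ _ f [set y | y = c]) => [x _|]; first exact: cf.
exact: closed_eq.
Qed.

Lemma closed_forall (I : Type) (A : I -> set T) :
  (forall i, closed (A i)) -> closed [set x | forall i, A i x].
Proof.
move=> cA; rewrite (_ : [set x | _] = \bigcap_i A i); first exact: closed_bigI.
by apply/seteqP; split => [x Ax i _|x Ax i]; [exact: Ax | exact: Ax].
Qed.

Lemma closed_imply (Q : Prop) (A : set T) : closed A -> closed [set x | Q -> A x].
Proof.
move=> cA; have [q|nq] := pselect Q.
  by rewrite (_ : [set x | _] = A) //; apply/seteqP; split => x //= /(_ q).
by rewrite (_ : [set x | _] = setT) ?closedT //; apply/seteqP; split => // x _ /nq.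
Qed.

End Continuity.

Section PointGeometry.
Variables (R : realType) (n : nat).
Implicit Types (p q y d : pt R n) (S C : set (pt R n)) (t : R).

Definition dotp d p : R := \sum_i d.1 i * p.1 i + \sum_i d.2 i * p.2 i.

Definition ptsub p q : pt R n :=
  (fun i => p.1 i - q.1 i, fun i => p.2 i - q.2 i).

Definition ptcomb t p q : pt R n :=
  (fun i => (1 - t) * p.1 i + t * q.1 i, fun i => (1 - t) * p.2 i + t * q.2 i).

Definition dist2 p q : R := dotp (ptsub p q) (ptsub p q).

Definition ptconvex C :=
  forall p q t, C p -> C q -> 0 <= t <= 1 -> C (ptcomb t p q).

Lemma dotpBr d p q : dotp d (ptsub p q) = dotp d p - dotp d q.
Proof.
rewrite /dotp /= opprD addrACA -!sumrB; congr (_ + _); apply: eq_bigr => i _; ring.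
Qed.

Lemma dist2_ge0 p q : 0 <= dist2 p q.
Proof. by rewrite /dist2 /dotp addr_ge0 // sumr_ge0 // => i _; rewrite -expr2 sqr_ge0. Qed.

Lemma dist2_le0 p q : dist2 p q <= 0 -> p = q.
Proof.
move=> pq0.
have sum_le0 (u v : 'I_n -> R) : \sum_i (u i - v i) * (u i - v i) <= 0 -> u = v.
  move=> uv0; apply/funext => i; apply/eqP; rewrite -subr_eq0; apply/eqP.
  apply: (@sum_sqr_le0 _ _ (fun j => u j - v j)).
  by under eq_bigr => j _ do rewrite expr2.
case: p q pq0 => [x z] [x' z']; rewrite /dist2 /dotp /= => pq0.
have sum_ge0 (u : 'I_n -> R) : 0 <= \sum_i u i * u i.
  by apply: sumr_ge0 => i _; rewrite -expr2 sqr_ge0.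
congr pair; apply: sum_le0; apply: le_trans pq0; [rewrite lerDl | rewrite lerDr];
  exact: sum_ge0.
Qed.

Lemma dist2_comb p q y t :
  dist2 p (ptcomb t q y) =
  dist2 p q - 2 * t * (dotp (ptsub p q) y - dotp (ptsub p q) q) + t ^+ 2 * dist2 y q.
Proof.
have comb (u v w : 'I_n -> R) :
    \sum_i (u i - ((1 - t) * v i + t * w i)) * (u i - ((1 - t) * v i + t * w i)) =
    \sum_i (u i - v i) * (u i - v i) - 2 * t * \sum_i (u i - v i) * (w i - v i)
      + t ^+ 2 * \sum_i (w i - v i) * (w i - v i).
  by rewrite !mulr_sumr -sumrB -big_split /=; apply: eq_bigr => i _; ring.
by rewrite -dotpBr /dist2 /dotp /= !comb; ring.
Qed.

(* If some y in C had dotp d y > dotp d q, moving from q towards y by the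
   step t = c / (dist2 y q + c), with c the excess, would bring us closer to p. *)
Lemma closest_point_dotp_le C p q : ptconvex C -> C q ->
    (forall y, C y -> dist2 p q <= dist2 p y) ->
  forall y, C y -> dotp (ptsub p q) y <= dotp (ptsub p q) q.
Proof.
move=> convC Cq qmin y Cy; rewrite leNgt -subr_gt0; apply/negP.
set c := _ - _ => c_gt0; set E := dist2 y q; have E_ge0 : 0 <= E := dist2_ge0 y q.
pose t := c / (E + c).
have Ec_gt0 : 0 < E + c by rewrite ltr_wpDl.
have t_gt0 : 0 < t by rewrite divr_gt0.
have tEc : t * (E + c) = c by rewrite divfK ?gt_eqF.
have t01 : 0 <= t <= 1 by rewrite ltW // ler_pdivrMr // mul1r lerDr.
by have := qmin _ (convC _ _ t Cq Cy t01); rewrite dist2_comb -/c -/E; nra.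
Qed.

Lemma conv_sub S C : S `<=` C -> conv S `<=` conv C.
Proof.
by move=> SC p [m [l [q [l_ge0 l1 Sq p1 p2]]]]; exists m, l, q; split => // k; exact: SC.
Qed.

Lemma conv_nonempty S p : conv S p -> S !=set0.
Proof.
case=> [[|m] [l [q [_ l1 Sq _ _]]]]; last by exists (q ord0).
by move: l1; rewrite big_ord0 => /esym/eqP; rewrite oner_eq0.
Qed.

Lemma conv_dotp_le S d c p :
  conv S p -> (forall y, S y -> dotp d y <= c) -> dotp d p <= c.
Proof.
move=> [m [l [q [l_ge0 l1 Sq p1 p2]]]] Sc.
have -> : dotp d p = \sum_k l k * dotp d (q k).
  rewrite /dotp; under eq_bigr => i _ do rewrite p1 mulr_sumr.
  under [X in _ + X]eq_bigr => i _ do rewrite p2 mulr_sumr.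
  rewrite exchange_big [X in _ + X]exchange_big -big_split /=; apply: eq_bigr => k _.
  by rewrite mulrDr !mulr_sumr; congr (_ + _); apply: eq_bigr => i _; ring.
have -> : c = \sum_k l k * c by rewrite -mulr_suml l1 mul1r.
by apply: ler_sum => k _; rewrite ler_wpM2l ?Sc.
Qed.

End PointGeometry.

Section Feasible.
Variables (R : realType) (n : nat) (Z : set ('I_n -> R)).
Hypothesis Z01 : forall z, Z z -> forall i, z i = 0 \/ z i = 1.

Lemma Xset_zero z : Z z -> Xset Z (fun=> 0, z).
Proof.
by move=> Zz; split => //= [|i]; rewrite ?mul0r // big1 // => i _; rewrite expr0n.
Qed.

Lemma Xset_sub_P0 alpha : Xset Z `<=` P0 Z alpha.
Proof.
move=> [x z] [/= Zz x_le1 xz0]; split => //=; have z01 := Z01 Zz.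
have az_ge0 i : 0 <= alpha i ^+ 2 * z i by case: (z01 i) => ->; rewrite ?mulr0 ?mulr1 ?sqr_ge0.
rewrite (eq_bigr (fun i => (`|alpha i| * z i) * `|x i|)); last first.
  move=> i _; have := xz0 i; case: (z01 i) => ->; last by rewrite mulr1 normrM.
  by rewrite subr0 mulr1 => ->; rewrite !(mulr0, normr0).
have zz i : z i ^+ 2 = z i by case: (z01 i) => ->; rewrite ?expr0n ?expr1n.
have az_le : \sum_i (`|alpha i| * z i) ^+ 2 <= Num.sqrt (\sum_i alpha i ^+ 2 * z i) ^+ 2.
  rewrite sqr_sqrtr; last by apply: sumr_ge0 => i _; exact: az_ge0.
  by apply: ler_sum => i _; rewrite exprMn real_normK ?num_real ?zz.
have x_le : \sum_i `|x i| ^+ 2 <= 1 ^+ 2.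
  by rewrite expr1n; apply: le_trans x_le1; apply: ler_sum => i _; rewrite real_normK ?num_real.
by rewrite -[X in _ <= X]mulr1; exact: sum_mul_le (sqrtr_ge0 _) ler01 az_le x_le.
Qed.

(* The maximum of (a, b) . p over P_0(a) is attained on X: a point (x, z) of
   P_0(a) is beaten by the point (a z / D, z) of X, D = sqrt(sum a_i^2 z_i);
   for D = 0 the junk value of division makes the latter (0, z). *)
Lemma P0_dotp_le_Xset (a b : 'I_n -> R) p :
  P0 Z a p -> exists2 y, Xset Z y & dotp (a, b) p <= dotp (a, b) y.
Proof.
case: p => x z [/= Zz]; have z01 := Z01 Zz.
set D := Num.sqrt _ => ax_le.
have D2 : D ^+ 2 = \sum_i a i ^+ 2 * z i.
  by rewrite sqr_sqrtr // sumr_ge0 // => i _; case: (z01 i) => ->; rewrite ?mulr0 ?mulr1 ?sqr_ge0.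
have DD : D ^+ 2 / D = D.
  by have [->|D0] := eqVneq D 0; rewrite ?invr0 ?mulr0 // expr2 mulfK.
clearbody D.
exists ((fun i => a i * z i / D), z).
  split => //= [|i]; last by case: (z01 i) => ->; ring.
  have -> : \sum_i (a i * z i / D) ^+ 2 = D ^+ 2 / D ^+ 2.
    rewrite {1}D2 mulr_suml; apply: eq_bigr => i _; rewrite expr_div_n exprMn.
    by case: (z01 i) => ->; ring.
  by have [->|D0] := eqVneq D 0; rewrite ?expr0n ?mul0r // divff // expf_neq0.
rewrite /dotp /= lerD2r (le_trans (ler_sum _ (fun i _ => ler_norm (a i * x i)))) //.
apply: (le_trans ax_le); rewrite -{1}DD D2 mulr_suml.
by apply: ler_sum => i _; rewrite !mulrA -expr2.
Qed.

End Feasible.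

Section Lifting.
Variables (R : realType) (n : nat) (Z : set ('I_n -> R)).
Hypothesis Z01 : forall z, Z z -> forall i, z i = 0 \/ z i = 1.

Definition npat := #|{ffun 'I_n -> bool}|.

Definition pat (r : 'I_npat) : {ffun 'I_n -> bool} := enum_val r.

Definition patv (r : 'I_npat) : 'I_n -> R := fun i => (pat r i)%:R.

Lemma patv_rank (z : 'I_n -> R) : (forall i, z i = 0 \/ z i = 1) ->
  patv (enum_rank [ffun i => z i == 1]) = z.
Proof.
move=> z01; apply/funext => i; rewrite /patv /pat enum_rankK ffunE.
by case: (z01 i) => ->; rewrite ?eqxx // eq_sym oner_eq0.
Qed.

(* Perspective of the slice of X over the pattern b: (m, w) lies in it iff
   w = m x with m >= 0 and x in the unit ball, supported on b. *)
Definition slice_cone (b : {ffun 'I_n -> bool}) (m : R) (w : 'I_n -> R) : Prop :=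
  0 <= m /\ \sum_i w i ^+ 2 <= m ^+ 2 /\ forall i, ~~ b i -> w i = 0.

Lemma slice_cone_comb b m1 w1 m2 w2 t : 0 <= t <= 1 ->
    slice_cone b m1 w1 -> slice_cone b m2 w2 ->
  slice_cone b ((1 - t) * m1 + t * m2) (fun i => (1 - t) * w1 i + t * w2 i).
Proof.
move=> /andP[t_ge0 t_le1] [m1_ge0 [w1_le w1_supp]] [m2_ge0 [w2_le w2_supp]].
have t'_ge0 : 0 <= 1 - t by rewrite subr_ge0.
split; first by rewrite addr_ge0 ?mulr_ge0.
split; last by move=> i bi; rewrite w1_supp ?w2_supp ?mulr0 ?addr0.
have -> : \sum_i ((1 - t) * w1 i + t * w2 i) ^+ 2 =
    (1 - t) ^+ 2 * \sum_i w1 i ^+ 2 + 2 * t * (1 - t) * \sum_i w1 i * w2 i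
      + t ^+ 2 * \sum_i w2 i ^+ 2.
  by rewrite !mulr_sumr -!big_split /=; apply: eq_bigr => i _; ring.
have := ler_wpM2l (sqr_ge0 (1 - t)) w1_le; have := ler_wpM2l (sqr_ge0 t) w2_le.
have := ler_wpM2l (_ : 0 <= 2 * t * (1 - t)) (sum_mul_le m1_ge0 m2_ge0 w1_le w2_le).
by move=> /(_ (mulr_ge0 (mulr_ge0 (ler0n _ 2) t_ge0) t'_ge0)); nra.
Qed.

(* A parameter stores, for each pattern r, a weight and a vector wvec = weight * x_r;
   lifted describes the convex combinations of one point (x_r, patv r) of X per
   pattern, and lift_point evaluates them. *)
Definition param := 'rV[R]_(npat * n.+1).

Definition weight (th : param) r : R := th ord0 (mxvec_index r ord0).

Definition wvec (th : param) r i : R := th ord0 (mxvec_index r (lift ord0 i)).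

Definition mkparam (m : 'I_npat -> R) (w : 'I_npat -> 'I_n -> R) : param :=
  mxvec (\matrix_(r, c) if unlift ord0 c is Some i then w r i else m r).

Lemma weight_mk m w r : weight (mkparam m w) r = m r.
Proof. by rewrite /weight /mkparam mxvecE mxE unlift_none. Qed.

Lemma wvec_mk m w r i : wvec (mkparam m w) r i = w r i.
Proof. by rewrite /wvec /mkparam mxvecE mxE liftK. Qed.

Lemma weight_comb t th1 th2 r :
  weight ((1 - t) *: th1 + t *: th2) r = (1 - t) * weight th1 r + t * weight th2 r.
Proof. by rewrite /weight !mxE. Qed.

Lemma wvec_comb t th1 th2 r i :
  wvec ((1 - t) *: th1 + t *: th2) r i = (1 - t) * wvec th1 r i + t * wvec th2 r i.
Proof. by rewrite /wvec !mxE. Qed.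

Definition lift_point (th : param) : pt R n :=
  (fun i => \sum_r wvec th r i, fun i => \sum_r weight th r * patv r i).

Lemma lift_point_comb t th1 th2 :
  lift_point ((1 - t) *: th1 + t *: th2) = ptcomb t (lift_point th1) (lift_point th2).
Proof.
rewrite /lift_point /ptcomb /=; congr pair; apply/funext => i.
  by rewrite !mulr_sumr -big_split; apply: eq_bigr => r _; rewrite wvec_comb.
by rewrite !mulr_sumr -big_split; apply: eq_bigr => r _; rewrite weight_comb mulrDl !mulrA.
Qed.

Definition lifted : set param :=
  [set th | \sum_r weight th r = 1] `&`
  [set th | forall r, slice_cone (pat r) (weight th r) (wvec th r) /\
                      (~ Z (patv r) -> weight th r = 0)].

Lemma lifted_comb t th1 th2 : 0 <= t <= 1 ->
  lifted th1 -> lifted th2 -> lifted ((1 - t) *: th1 + t *: th2).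
Proof.
move=> t01 [sum1 cone1] [sum2 cone2]; split => /= [|r].
  under eq_bigr => r _ do rewrite weight_comb.
  by rewrite big_split /= -!mulr_sumr sum1 sum2; ring.
have [c1 Z1] := cone1 r; have [c2 Z2] := cone2 r.
split=> [|nZ]; rewrite weight_comb; last by rewrite Z1 ?Z2 // !mulr0 addr0.
rewrite (_ : wvec _ r = fun i => (1 - t) * wvec th1 r i + t * wvec th2 r i).
  exact: slice_cone_comb.
by apply/funext => i; rewrite wvec_comb.
Qed.

Lemma lifted_image_convex : ptconvex (lift_point @` lifted).
Proof.
move=> _ _ t [th1 L1 <-] [th2 L2 <-] t01.
by exists ((1 - t) *: th1 + t *: th2); [exact: lifted_comb | exact: lift_point_comb].
Qed.

Lemma Xset_lifted y : Xset Z y -> exists2 th, lifted th & lift_point th = y.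
Proof.
move: y => [x z] [/= Zz x_le1 xz0]; have z01 := Z01 Zz.
pose r0 := enum_rank [ffun i => z i == 1]; have r0z : patv r0 = z := patv_rank z01.
pose at_r0 (r : 'I_npat) (v : R) := if r == r0 then v else 0.
have sum_at_r0 (F : 'I_npat -> R) : \sum_r at_r0 r (F r) = F r0.
  by rewrite (bigD1 r0) //= /at_r0 eqxx big1 ?addr0 // => r /negbTE ->.
exists (mkparam (fun r => at_r0 r 1) (fun r i => at_r0 r (x i))).
  split => /= [|r]; first by under eq_bigr => r _ do rewrite weight_mk; rewrite sum_at_r0.
  rewrite weight_mk /at_r0; case: eqP => [->|ne_r]; last first.
    have w0 i : wvec (mkparam (fun r => at_r0 r 1) (fun r i => at_r0 r (x i))) r i = 0.
      by rewrite wvec_mk /at_r0 ifN //; apply/eqP.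
    split=> //; split; first exact: lexx.
    split; last by move=> i _; rewrite w0.
    by rewrite big1 ?sqr_ge0 // => i _; rewrite w0 expr0n.
  split; last by rewrite r0z.
  split; first exact: ler01.
  split; first by under eq_bigr => i _ do rewrite wvec_mk /at_r0 eqxx; rewrite expr1n.
  move=> i; rewrite wvec_mk /at_r0 eqxx => /negbTE pat0.
  by have := xz0 i; rewrite -r0z /patv pat0 subr0 mulr1.
rewrite /lift_point; congr pair; apply/funext => i.
  by under eq_bigr => r _ do rewrite wvec_mk; rewrite sum_at_r0.
rewrite -r0z -(sum_at_r0 (patv ^~ i)); apply: eq_bigr => r _.
by rewrite weight_mk /at_r0; case: eqP; rewrite ?mul1r ?mul0r.
Qed.

Lemma lifted_conv z0 th : Z z0 -> lifted th -> conv (Xset Z) (lift_point th).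
Proof.
move=> Zz0 [/= sum1 cone].
have w0 r : weight th r = 0 -> forall i, wvec th r i = 0.
  move=> m0; have [[_ [w_le _]] _] := cone r; apply: sum_sqr_le0.
  by rewrite m0 expr0n in w_le.
pose q r : pt R n := if weight th r == 0 then (fun=> 0, z0)
                     else ((fun i => wvec th r i / weight th r), patv r).
exists npat, (weight th), q; split => //.
- by move=> r; have [[]] := cone r.
- move=> r; rewrite /q; case: eqP => [_|m_neq0]; first exact: Xset_zero.
  have [[m_ge0 [w_le w_supp]] Zr] := cone r.
  have m_gt0 : 0 < weight th r by rewrite lt_def m_ge0 andbT; apply/eqP.
  split => /= [|| i].
  + by apply: contrapT => /Zr.
  + under eq_bigr => i _ do rewrite expr_div_n.
    by rewrite -mulr_suml ler_pdivrMr ?exprn_gt0 // mul1r.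
  + rewrite /patv; case: (boolP (pat r i)) => [_|/w_supp ->].
      by rewrite subrr mulr0.
    by rewrite !mul0r.
- move=> i /=; apply: eq_bigr => r _; rewrite /q; case: eqP => [m0|m_neq0] /=.
    by rewrite w0 // m0 mul0r.
  by rewrite mulrC divfK //; apply/eqP.
- move=> i /=; apply: eq_bigr => r _; rewrite /q.
  by case: eqP => [->|_] //=; rewrite !mul0r.
Qed.

Lemma closed_slice_cone (T : topologicalType) b (m : T -> R) (w : T -> 'I_n -> R) :
    continuous m -> (forall i, continuous (fun x => w x i)) ->
  closed [set x | slice_cone b (m x) (w x)].
Proof.
move=> cm cw; apply: closedI; first exact: closed_le_continuous (@cst_continuous T R 0) cm.
apply: closedI.
  apply: closed_le_continuous; last exact: (continuous_mul cm cm).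
  by apply: continuous_sum => i; exact: (continuous_mul (cw i) (cw i)).
by apply: closed_forall => i; apply: closed_imply; exact: closed_eq_continuous.
Qed.

Lemma continuous_weight r : continuous (fun th : param => weight th r).
Proof. exact: coord_continuous. Qed.

Lemma continuous_wvec r i : continuous (fun th : param => wvec th r i).
Proof. exact: coord_continuous. Qed.

Lemma lifted_closed : closed lifted.
Proof.
apply: closedI.
  by apply: closed_eq_continuous; apply: continuous_sum => r; exact: continuous_weight.
apply: closed_forall => r; apply: closedI.
  by apply: closed_slice_cone => [|i]; [exact: continuous_weight | exact: continuous_wvec].
by apply: closed_imply; apply: closed_eq_continuous; exact: continuous_weight.
Qed.

Lemma lifted_compact : compact lifted.
Proof.
have box := rV_compact (fun _ : 'I_(npat * n.+1) => @segment_compact R (-1) 1).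
have := compact_closedI box lifted_closed; rewrite setIidr //.
move=> th [/= sum1 cone] j; rewrite in_itv /=.
case/mxvec_indexP: j => r c.
have [[m_ge0 [w_le _]] _] := cone r.
have m_le1 : weight th r <= 1.
  by rewrite -sum1 (bigD1 r) //= lerDl sumr_ge0 // => s _; have [[]] := cone s.
case: (unliftP ord0 c) => [i ->|->]; last by rewrite -/(weight th r); apply/andP; split; lra.
have wi : wvec th r i ^+ 2 <= weight th r ^+ 2.
  by apply: le_trans w_le; rewrite (bigD1 i) //= lerDl sumr_ge0 // => k _; rewrite sqr_ge0.
by rewrite -/(wvec th r i); apply/andP; split; nra.
Qed.

Lemma continuous_dist2_lift_point p : continuous (fun th => dist2 p (lift_point th)).
Proof.
have sq (f : param -> R) : continuous f -> continuous (fun th => f th * f th).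
  by move=> cf; exact: continuous_mul.
rewrite /dist2 /dotp /=.
apply: continuous_add; apply: continuous_sum => i; apply: sq;
  (apply: continuous_sub; first exact: cst_continuous); apply: continuous_sum => r.
  exact: continuous_wvec.
apply: continuous_mul; [exact: continuous_weight | exact: cst_continuous].
Qed.

End Lifting.

Theorem theorem1 (R : realType) (n : nat) (Z : set ('I_n -> R))
  (HZ : forall z, Z z -> forall i, z i = 0 \/ z i = 1) :
  conv (Xset Z) = \bigcap_(alpha in [set: 'I_n -> R]) Pset Z alpha.
Proof.
apply/seteqP; split => [p Xp alpha _ | p Pp]; first exact: conv_sub (Xset_sub_P0 HZ alpha) _ Xp.
have [[x0 z0] [/= Zz0 _]] := conv_nonempty (Pp (fun=> 0) I).
have [th0 L0 _] := Xset_lifted HZ (Xset_zero Zz0).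
have [th Lth thmin] := compact_EVT_min (ex_intro _ th0 L0) (@lifted_compact R n Z)
  (continuous_subspaceT (@continuous_dist2_lift_point R n p)).
rewrite inE in Lth; set q := lift_point th; set d := ptsub p q.
have dXq y : Xset Z y -> dotp d y <= dotp d q.
  move=> /(Xset_lifted HZ) [th' L' <-].
  apply: (closest_point_dotp_le (@lifted_image_convex R n Z)); last exact: imageP.
    exact: imageP.
  by move=> _ [th'' L'' <-]; apply: thmin; rewrite inE.
have : dotp d p <= dotp d q.
  apply: conv_dotp_le (Pp d.1 I) _ => y /(P0_dotp_le_Xset HZ d.2) [x Xx yx].
  exact: le_trans yx (dXq x Xx).
by rewrite -subr_le0 -dotpBr => /dist2_le0 ->; exact: lifted_conv Zz0 Lth.
Qed.
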